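(* There is $n_0$ such that the following holds for all $n\ge n_0$. Let $G=(V,E)$ be an $n$-vertex graph with nonnegative interactions $J$, let $\mu$ be the associated zero-field Ising measure, and let $F\subset V$ be a subset of size $\lfloor \sqrt n/\log n\rfloor$ satisfying $\sum_{u,v\in F,u\ne v}\mathrm{Cov}_\mu(\sigma(u),\sigma(v))\le 2/\log n$. Then the chain $(Z_t)$ on $\{-1,1\}^F$ has mixing time from the all-plus configuration $t_{\mathrm{mix}}^+\ge\frac12|F|\log|F|-20|F|$.
   Context: The Ising measure is $\mu(\sigma)=Z^{-1}\exp(\sum_{uv\in E}J_{uv}\sigma(u)\sigma(v))$ on $\{\pm1\}^V$, $J_{uv}\ge0$. The chain $(Z_t)$ on $\{-1,1\}^F$: at each step a vertex $v\in F$ is chosen uniformly at random and $Z(v)$ is resampled from the conditional law of $\sigma(v)$ under $\mu$ given the spins on $F\setminus\{v\}$; its stationary law $\nu_F$ is the marginal of $\mu$ on $F$. $t_{\mathrm{mix}}^+=\min\{t:\|\mathbb P_+(Z_t\in\cdot)-\nu_F\|_{TV}\le1/4\}$, with $\mathbb P_+$ the law of the chain started from all-plus and $\|\cdot\|_{TV}$ total variation distance. *)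

From HB Require Import structures.
From mathcomp Require Import all_boot all_order all_algebra.
From mathcomp Require Import reals.
From mathcomp Require Import sequences exp.
Set Implicit Arguments. Unset Strict Implicit. Unset Printing Implicit Defensive.
Import Order.TTheory GRing.Theory Num.Theory.
Local Open Scope ring_scope.

Section Ising.
Variable R : realType.
Variable n : nat.

Definition config := {ffun 'I_n -> bool}.
Definition spin (b : bool) : R := if b then 1 else -1.

Variables (adj : rel 'I_n) (J : 'I_n -> 'I_n -> R).

Definition ising_weight (s : config) : R :=
  expR (\sum_(u : 'I_n) \sum_(v : 'I_n | (u < v)%N && adj u v)
          J u v * spin (s u) * spin (s v)).
Definition ising_Z : R := \sum_(s : config) ising_weight s.
Definition ising_mu (s : config) : R := ising_weight s / ising_Z.
Definition ising_E (f : config -> R) : R := \sum_(s : config) ising_mu s * f s.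
Definition ising_cov (u v : 'I_n) : R :=
  ising_E (fun s => spin (s u) * spin (s v))
  - ising_E (fun s => spin (s u)) * ising_E (fun s => spin (s v)).

Variable F : {set 'I_n}.
Definition Fsite := {x : 'I_n | x \in F}.
Definition Fconfig := {ffun Fsite -> bool}.
Definition restrF (s : config) : Fconfig := [ffun x => s (val x)].
Definition nuF (eta : Fconfig) : R := \sum_(s : config | restrF s == eta) ising_mu s.
Definition setF (eta : Fconfig) (v : 'I_n) (b : bool) : Fconfig :=
  [ffun x => if val x == v then b else eta x].
(* heat-bath transition kernel: v uniform in F, Z(v) resampled from the
   conditional law of sigma(v) given the spins on F \ {v} under mu *)
Definition Kmat (eta eta' : Fconfig) : R :=
  (#|F|%:R)^-1 * \sum_(v in F) \sum_(b : bool)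
     (if eta' == setF eta v b then
        nuF (setF eta v b) / (nuF (setF eta v true) + nuF (setF eta v false))
      else 0).
Definition all_plusF : Fconfig := [ffun => true].
Fixpoint lawZ (t : nat) : {ffun Fconfig -> R} :=
  match t with
  | 0%N => [ffun eta => if eta == all_plusF then 1 else 0]
  | t'.+1 => [ffun eta' => \sum_(eta : Fconfig) lawZ t' eta * Kmat eta eta']
  end.
Definition tv_dist (p q : Fconfig -> R) : R :=
  2^-1 * \sum_(eta : Fconfig) `|p eta - q eta|.
(* t is in the set whose minimum is t_mix^+ *)
Definition mixed_by (t : nat) : Prop := tv_dist (lawZ t) nuF <= 4^-1.
End Ising.

From HB Require Import structures.
From mathcomp Require Import all_boot all_order all_algebra.
From mathcomp Require Import reals.
From mathcomp Require Import sequences exp.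
From mathcomp Require Import ring lra.
Import Order.TTheory GRing.Theory Num.Theory.
Set Implicit Arguments. Unset Strict Implicit. Unset Printing Implicit Defensive.
Local Open Scope ring_scope.

(* Run the heat-bath chain from all plus and let U be the set of sites not yet updated
   at time t; its size has mean m = N (1 - 1/N)^t, still >= 400 when
   t < N log N / 2 - 20 N, and concentrates by a second-moment computation.
   The marginal nu of the Ising measure is positive, supermodular and flip invariant, so
   FKG holds and the heat-bath updates are monotone; hence the law at time t dominates
   nu conditioned on plus spins on U.  Under that measure the magnetization is |U| plus
   the magnetization of the other sites, which FKG and Chebyshev keep above -m/4: the
   covariance hypothesis bounds its second moment by N + 1.  So the magnetization is at
   least m/4 with probability close to 1 for the chain but at most (N + 1)/(m/4)^2 under
   nu, and the total variation distance exceeds 1/4. *)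

Lemma ahlswede_daykin2 (R : realFieldType) (a0 a1 b0 b1 c0 c1 d0 d1 : R) :
  0 <= a0 -> 0 <= a1 -> 0 <= b0 -> 0 <= b1 -> 0 <= c0 -> 0 <= c1 -> 0 <= d0 -> 0 <= d1 ->
  a0 * b0 <= c0 * d0 -> a1 * b1 <= c1 * d1 -> a0 * b1 <= c1 * d0 -> a1 * b0 <= c1 * d0 ->
  (a0 + a1) * (b0 + b1) <= (c0 + c1) * (d0 + d1).
Proof.
move=> ha0 ha1 hb0 hb1 hc0 hc1 hd0 hd1 h00 h11 h01 h10.
set r := c1 * d0.
have cross : a0 * b1 + a1 * b0 <= r + c0 * d1.
  have [r0|rpos] := eqVneq r 0.
    have e1 : a0 * b1 = 0 by apply/eqP; rewrite eq_le mulr_ge0 // andbT -r0.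
    have e2 : a1 * b0 = 0 by apply/eqP; rewrite eq_le mulr_ge0 // andbT -r0.
    by rewrite e1 e2 r0 addr0 add0r mulr_ge0.
  have rgt : 0 < r by rewrite lt_def rpos mulr_ge0.
  (* x + y <= r + p/r whenever x, y <= r and x y <= p *)
  have hpq : (a0 * b1) * (a1 * b0) <= r * (c0 * d1).
    have -> : (a0 * b1) * (a1 * b0) = (a0 * b0) * (a1 * b1) by ring.
    have -> : r * (c0 * d1) = (c0 * d0) * (c1 * d1) by rewrite /r; ring.
    by apply: ler_pM; rewrite ?mulr_ge0.
  have hprod : 0 <= (r - a0 * b1) * (r - a1 * b0) by rewrite mulr_ge0 // subr_ge0.
  rewrite -(ler_pM2l rgt); nra.
have -> : (a0 + a1) * (b0 + b1) = a0 * b0 + a1 * b1 + (a0 * b1 + a1 * b0) by ring.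
have -> : (c0 + c1) * (d0 + d1) = c0 * d0 + c1 * d1 + (r + c0 * d1) by rewrite /r; ring.
by apply: lerD; [apply: lerD|].
Qed.

Section FourFunctions.
Variables (R : realFieldType) (T : finType).
Local Notation cfg := {ffun T -> bool}.

Definition cfg_join (x y : cfg) : cfg := [ffun i => x i || y i].
Definition cfg_meet (x y : cfg) : cfg := [ffun i => x i && y i].
Definition cfg_set (x : cfg) (i : T) (b : bool) : cfg :=
  [ffun j => if j == i then b else x j].
Definition agree_off (S : {set T}) (x y : cfg) : bool :=
  [forall j, (j \notin S) ==> (x j == y j)].

Lemma agree_off_set (S : {set T}) (i : T) (x x0 : cfg) (b : bool) : i \notin S ->
  agree_off S x (cfg_set x0 i b) = agree_off (i |: S) x x0 && (x i == b).
Proof.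
move=> iS; apply/idP/idP.
  move/forallP=> H; apply/andP; split.
    apply/forallP=> j; apply/implyP; rewrite in_setU1 negb_or => /andP[jni jS].
    by have := implyP (H j) jS; rewrite ffunE (negbTE jni).
  by have := implyP (H i) iS; rewrite ffunE eqxx.
move=> /andP[/forallP H /eqP xb]; apply/forallP=> j; apply/implyP=> jS.
rewrite ffunE; case: (j =P i) => [->|/eqP ji]; first by rewrite xb.
by apply: (implyP (H j)); rewrite in_setU1 negb_or ji jS.
Qed.

Lemma sum_agree_offU1 (S : {set T}) (i : T) (x0 : cfg) (f : cfg -> R) : i \notin S ->
  \sum_(x | agree_off (i |: S) x x0) f x =
  \sum_(b : bool) \sum_(x | agree_off S x (cfg_set x0 i b)) f x.
Proof.
move=> iS; rewrite big_bool /= !(big_mkcond (fun x => agree_off _ x _)) -big_split /=.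
apply: eq_bigr => x _; rewrite !agree_off_set //.
by case: (agree_off _ x x0); case: (x i); rewrite /= ?addr0 ?add0r.
Qed.

Lemma sum_agree_off0 (x0 : cfg) (f : cfg -> R) :
  \sum_(x | agree_off set0 x x0) f x = f x0.
Proof.
apply: big_pred1 => x /=; apply/forallP/eqP => [H|->]; last first.
  by move=> j; rewrite eqxx implybT.
by apply/ffunP => j; apply/eqP; apply: (implyP (H j)); rewrite in_set0.
Qed.

Lemma cfg_join_set (x y : cfg) (i : T) (b b' : bool) :
  cfg_join (cfg_set x i b) (cfg_set y i b') = cfg_set (cfg_join x y) i (b || b').
Proof. by apply/ffunP=> j; rewrite !ffunE; case: (j == i). Qed.

Lemma cfg_meet_set (x y : cfg) (i : T) (b b' : bool) :
  cfg_meet (cfg_set x i b) (cfg_set y i b') = cfg_set (cfg_meet x y) i (b && b').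
Proof. by apply/ffunP=> j; rewrite !ffunE; case: (j == i). Qed.

Section Hypotheses.
Variables a b c d : cfg -> R.
Hypotheses (a_ge0 : forall x, 0 <= a x) (b_ge0 : forall x, 0 <= b x).
Hypotheses (c_ge0 : forall x, 0 <= c x) (d_ge0 : forall x, 0 <= d x).

(* Induction on the set of free coordinates, the others being frozen to x0 and y0. *)
Lemma ahlswede_daykin_agree_off (s : seq T) (x0 y0 : cfg) :
  let S := [set j in s] in
  (forall x y, agree_off S x x0 -> agree_off S y y0 ->
     a x * b y <= c (cfg_join x y) * d (cfg_meet x y)) ->
  (\sum_(x | agree_off S x x0) a x) * (\sum_(y | agree_off S y y0) b y) <=
  (\sum_(z | agree_off S z (cfg_join x0 y0)) c z) *
  (\sum_(z | agree_off S z (cfg_meet x0 y0)) d z).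
Proof.
elim: s x0 y0 => [|i s IH] x0 y0 /= H.
  have -> : [set j in [::]] = set0 :> {set T} by apply/setP=> j; rewrite !inE.
  by rewrite !sum_agree_off0; apply: H; apply/forallP=> j; rewrite eqxx implybT.
have [iS|iS] := boolP (i \in s).
  have e : [set j in i :: s] = [set j in s].
    by apply/setP=> j; rewrite !inE; case: eqP => // ->.
  by rewrite e; apply: IH; rewrite -e.
have e : [set j in i :: s] = i |: [set j in s] by apply/setP=> j; rewrite !inE.
have iS' : i \notin [set j in s] by rewrite inE.
rewrite e !sum_agree_offU1 // !big_bool /=.
have IH' bx br : (\sum_(x | agree_off [set j in s] x (cfg_set x0 i bx)) a x) *
    (\sum_(y | agree_off [set j in s] y (cfg_set y0 i br)) b y) <=
    (\sum_(z | agree_off [set j in s] z (cfg_set (cfg_join x0 y0) i (bx || br))) c z) *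
    (\sum_(z | agree_off [set j in s] z (cfg_set (cfg_meet x0 y0) i (bx && br))) d z).
  rewrite -cfg_join_set -cfg_meet_set; apply: IH => x y hx hy.
  by apply: H; rewrite e; [move: hx | move: hy]; rewrite agree_off_set // => /andP[].
rewrite [X in X * _ <= _]addrC [X in _ * X <= _]addrC.
rewrite [X in _ <= X * _]addrC [X in _ <= _ * X]addrC.
apply: ahlswede_daykin2; rewrite ?sumr_ge0 //;
  first [exact: (IH' false false) | exact: (IH' true true)
        | exact: (IH' false true) | exact: (IH' true false)].
Qed.

Theorem ahlswede_daykin :
  (forall x y, a x * b y <= c (cfg_join x y) * d (cfg_meet x y)) ->
  (\sum_x a x) * (\sum_y b y) <= (\sum_z c z) * (\sum_z d z).
Proof.
move=> H.
have agreeT x y : agree_off [set j in enum T] x y.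
  by apply/forallP=> j; rewrite inE mem_enum.
have := @ahlswede_daykin_agree_off (enum T) [ffun=> false] [ffun=> false] (fun x y _ _ => H x y).
by rewrite !(eq_bigl _ _ (fun x => agreeT x _)).
Qed.

End Hypotheses.

Definition cfg_le (x y : cfg) := [forall i, x i ==> y i].
Definition increasing (g : cfg -> R) := forall x y, cfg_le x y -> g x <= g y.

Lemma cfg_le_joinl x y : cfg_le x (cfg_join x y).
Proof. by apply/forallP=> i; rewrite ffunE; case: (x i). Qed.

Lemma cfg_le_joinr x y : cfg_le y (cfg_join x y).
Proof. by apply/forallP=> i; rewrite ffunE; case: (y i); rewrite ?orbT. Qed.

Variable nu : cfg -> R.
Hypothesis nu_gt0 : forall x, 0 < nu x.
Hypothesis nu_supermod : forall x y, nu x * nu y <= nu (cfg_join x y) * nu (cfg_meet x y).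

Theorem fkg (g h : cfg -> R) : (forall x, 0 <= g x) -> (forall x, 0 <= h x) ->
  increasing g -> increasing h ->
  (\sum_x nu x * g x) * (\sum_x nu x * h x) <= (\sum_x nu x * (g x * h x)) * (\sum_x nu x).
Proof.
move=> g0 h0 gi hi; have nu0 x := ltW (nu_gt0 x).
apply: ahlswede_daykin => [x|x|x|x|x y]; rewrite ?mulr_ge0 //.
have -> : nu x * g x * (nu y * h y) = (nu x * nu y) * (g x * h y) by ring.
set u := cfg_join x y; set v := cfg_meet x y.
have -> : nu u * (g u * h u) * nu v = (nu u * nu v) * (g u * h u) by ring.
apply: ler_pM; rewrite ?mulr_ge0 //.
by apply: ler_pM => //; [exact: gi (cfg_le_joinl x y) | exact: hi (cfg_le_joinr x y)].
Qed.

End FourFunctions.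

Section HeatBath.
Variables (R : realFieldType) (T : finType).
Local Notation cfg := {ffun T -> bool}.
Variable nu : cfg -> R.
Hypothesis nu_gt0 : forall x, 0 < nu x.
Hypothesis nu_supermod : forall x y, nu x * nu y <= nu (cfg_join x y) * nu (cfg_meet x y).

Lemma cfg_set_at (e : cfg) i b : cfg_set e i b i = b.
Proof. by rewrite ffunE eqxx. Qed.

Lemma cfg_set_set (e : cfg) i a b : cfg_set (cfg_set e i a) i b = cfg_set e i b.
Proof. by apply/ffunP=> j; rewrite !ffunE; case: (j == i). Qed.

Lemma cfg_set_id (e : cfg) i b : e i = b -> cfg_set e i b = e.
Proof. by move=> <-; apply/ffunP=> j; rewrite !ffunE; case: (j =P i) => [->|]. Qed.

Definition site_mass i (e : cfg) := nu (cfg_set e i true) + nu (cfg_set e i false).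

Lemma site_mass_gt0 i e : 0 < site_mass i e.
Proof. by rewrite /site_mass addr_gt0. Qed.

Lemma site_mass_set i e b : site_mass i (cfg_set e i b) = site_mass i e.
Proof. by rewrite /site_mass !cfg_set_set. Qed.

Definition heat_bath i (e : cfg) b := nu (cfg_set e i b) / site_mass i e.

Lemma heat_bath_ge0 i e b : 0 <= heat_bath i e b.
Proof. by rewrite /heat_bath divr_ge0 ?ltW ?site_mass_gt0. Qed.

Lemma heat_bath_sum i e : heat_bath i e true + heat_bath i e false = 1.
Proof. by rewrite /heat_bath -mulrDl divff // gt_eqF // site_mass_gt0. Qed.

Definition hb_kernel i (e e' : cfg) : R :=
  \sum_(b : bool) (if e' == cfg_set e i b then heat_bath i e b else 0).
Definition hb_step i (p : cfg -> R) : cfg -> R := fun e' => \sum_e p e * hb_kernel i e e'.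
Definition hb_mean i (g : cfg -> R) (e : cfg) : R :=
  \sum_(b : bool) heat_bath i e b * g (cfg_set e i b).

Lemma hb_step_pair i p g : \sum_e' hb_step i p e' * g e' = \sum_e p e * hb_mean i g e.
Proof.
rewrite /hb_step; under eq_bigr do rewrite mulr_suml.
rewrite exchange_big /=; apply: eq_bigr => e _.
under eq_bigr do rewrite -mulrA; rewrite -mulr_sumr; congr (_ * _).
rewrite /hb_kernel; under eq_bigr do rewrite mulr_suml.
rewrite exchange_big /=; apply: eq_bigr => b _.
rewrite (bigD1 (cfg_set e i b)) //= eqxx big1 ?addr0 // => e' /negbTE ->.
exact: mul0r.
Qed.

Lemma hb_mean_cst i c e : hb_mean i (fun _ => c) e = c.
Proof. by rewrite /hb_mean big_bool /= -mulrDl heat_bath_sum mul1r. Qed.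

(* Supermodularity of [nu] at the pair (e with a plus spin at i, f with a minus spin at i). *)
Lemma heat_bath_true_mono i e f :
  cfg_le e f -> heat_bath i e true <= heat_bath i f true.
Proof.
move=> lef.
have hjoin : cfg_join (cfg_set e i true) (cfg_set f i false) = cfg_set f i true.
  apply/ffunP=> j; rewrite !ffunE; case: (j == i) => //.
  by have := forallP lef j; case: (e j); case: (f j).
have hmeet : cfg_meet (cfg_set e i true) (cfg_set f i false) = cfg_set e i false.
  apply/ffunP=> j; rewrite !ffunE; case: (j == i); rewrite ?andbF //.
  by have := forallP lef j; case: (e j); case: (f j).
have := nu_supermod (cfg_set e i true) (cfg_set f i false); rewrite hjoin hmeet => lat.
rewrite /heat_bath ler_pdivrMr ?site_mass_gt0 // mulrAC ler_pdivlMr ?site_mass_gt0 //.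
by rewrite /site_mass !mulrDr lerD // mulrC.
Qed.

(* [hb_mean i g e = g e_- + p_e (g e_+ - g e_-)] with [p_e <= p_f] and [g e_+- <= g f_+-]. *)
Lemma hb_mean_increasing i g : increasing g -> increasing (hb_mean i g).
Proof.
move=> gi e f lef; rewrite /hb_mean !big_bool /=.
have le_set b : cfg_le (cfg_set e i b) (cfg_set f i b).
  apply/forallP=> j; rewrite !ffunE; case: (j == i); first by case: b.
  exact: (forallP lef j).
have le_flip : cfg_le (cfg_set f i false) (cfg_set f i true).
  by apply/forallP=> j; rewrite !ffunE; case: (j == i) => //; case: (f j).
have hpq := heat_bath_true_mono i lef.
have s1 := heat_bath_sum i e; have s2 := heat_bath_sum i f.
have g1 := gi _ _ (le_set true); have g2 := gi _ _ (le_set false).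
have g3 := gi _ _ le_flip.
have pt := heat_bath_ge0 i e true; have pf := heat_bath_ge0 i e false.
nra.
Qed.

Definition dominates (p q : cfg -> R) :=
  forall g, increasing g -> \sum_e q e * g e <= \sum_e p e * g e.

Lemma hb_step_dominates i p q : dominates p q -> dominates (hb_step i p) (hb_step i q).
Proof.
by move=> pq g gi; rewrite !hb_step_pair; apply: pq; exact: hb_mean_increasing.
Qed.

Lemma hb_step_mass i p : \sum_e hb_step i p e = \sum_e p e.
Proof.
transitivity (\sum_e hb_step i p e * 1); first by apply: eq_bigr => e _; rewrite mulr1.
by rewrite hb_step_pair; apply: eq_bigr => e _; rewrite hb_mean_cst mulr1.
Qed.

Lemma hb_step_scale i c p e : hb_step i (fun f => c * p f) e = c * hb_step i p e.
Proof. by rewrite /hb_step mulr_sumr; apply: eq_bigr => f _; rewrite mulrA. Qed.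

Definition hb_steps (s : seq T) (p : cfg -> R) : cfg -> R :=
  foldl (fun q i => hb_step i q) p s.

Lemma hb_steps_rcons s i p : hb_steps (rcons s i) p = hb_step i (hb_steps s p).
Proof. by rewrite /hb_steps foldl_rcons. Qed.

Lemma hb_steps_dominates s p q : dominates p q -> dominates (hb_steps s p) (hb_steps s q).
Proof. by elim: s p q => [|i s IH] p q pq //=; apply: IH; exact: hb_step_dominates. Qed.

Lemma hb_steps_mass s p : \sum_e hb_steps s p e = \sum_e p e.
Proof. by elim: s p => [|i s IH] p //=; rewrite IH hb_step_mass. Qed.

Lemma hb_steps_scale s c p e : hb_steps s (fun f => c * p f) e = c * hb_steps s p e.
Proof.
elim/last_ind: s e => [|s i IH] e //.
by rewrite !hb_steps_rcons -hb_step_scale; apply: eq_bigr => f _; rewrite IH.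
Qed.

Lemma sum_cfg_set_eq (e' : cfg) i b (H : cfg -> R) :
  \sum_e (if e' == cfg_set e i b then H e else 0) =
  if e' i == b then H (cfg_set e' i true) + H (cfg_set e' i false) else 0.
Proof.
have split e : (e' == cfg_set e i b) = (e' i == b) && (e == cfg_set e' i (e i)).
  apply/eqP/andP => [->|[/eqP h /eqP h2]].
    by rewrite cfg_set_at cfg_set_set cfg_set_id // eqxx.
  by rewrite h2 cfg_set_set cfg_set_id.
under eq_bigr do rewrite split.
case: (e' i == b) => /=; last by rewrite big1.
rewrite (bigD1 (cfg_set e' i true)) //= cfg_set_at eqxx.
rewrite (bigD1 (cfg_set e' i false)) /=; last first.
  by apply/eqP=> /(congr1 (fun f : cfg => f i)); rewrite !cfg_set_at.
rewrite cfg_set_at eqxx big1 ?addr0 // => e /andP[ht hf].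
case: eqP => // he; move: ht hf; rewrite he.
by case: (e i); rewrite eqxx.
Qed.

Definition nu_on (B : pred cfg) (e : cfg) : R := nu e * (B e)%:R.

Lemma hb_step_nu_on (B : pred cfg) i : (forall e b, B (cfg_set e i b) = B e) ->
  hb_step i (nu_on B) =1 nu_on B.
Proof.
move=> hB e'; rewrite /hb_step.
under eq_bigr do rewrite /hb_kernel mulr_sumr.
rewrite exchange_big /=.
under eq_bigr => b _.
  rewrite (eq_bigr (fun e => if e' == cfg_set e i b then nu_on B e * heat_bath i e b else 0)).
    rewrite sum_cfg_set_eq; over.
  by move=> e _; case: ifP; rewrite ?mulr0.
rewrite big_bool /= /nu_on !hB /heat_bath !site_mass_set !cfg_set_set.
have reversible b : nu (cfg_set e' i true) * (B e')%:R * (nu (cfg_set e' i b) / site_mass i e') +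
   nu (cfg_set e' i false) * (B e')%:R * (nu (cfg_set e' i b) / site_mass i e') =
   nu (cfg_set e' i b) * (B e')%:R.
  rewrite -mulrDl -mulrDl -/(site_mass i e').
  by field; rewrite gt_eqF ?site_mass_gt0.
rewrite !reversible; case: (boolP (e' i)) => h /=.
  by rewrite addr0 cfg_set_id.
by rewrite add0r cfg_set_id // (negbTE h).
Qed.

Lemma hb_steps_nu_on (B : pred cfg) s :
  (forall i, i \in s -> forall e b, B (cfg_set e i b) = B e) ->
  hb_steps s (nu_on B) =1 nu_on B.
Proof.
elim/last_ind: s => [|s i IH] hs e //.
rewrite hb_steps_rcons -[RHS](hb_step_nu_on (hs i _)); last by rewrite mem_rcons mem_head.
by apply: eq_bigr => f _; rewrite IH // => j js; apply: hs; rewrite mem_rcons inE js orbT.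
Qed.

End HeatBath.

Section UnvisitedSites.
Variables (R : realFieldType) (T : finType).
Local Notation N := #|T|.

Fixpoint site_seqs (t : nat) : seq (seq T) :=
  if t is t'.+1 then [seq rcons s x | s <- site_seqs t', x <- enum T] else [:: [::]].

Lemma sum_site_seqsS t (G : seq T -> R) :
  \sum_(s <- site_seqs t.+1) G s = \sum_(s <- site_seqs t) \sum_x G (rcons s x).
Proof. by rewrite /= big_allpairs_dep; apply: eq_bigr => s _; exact: big_enum. Qed.

Lemma sum_site_seqs_all t (P : pred T) :
  \sum_(s <- site_seqs t) ((all P s)%:R : R) = (#|P|%:R) ^+ t.
Proof.
elim: t => [|t IH]; first by rewrite /= big_seq1 /= expr0.
rewrite sum_site_seqsS exprSr -IH mulr_suml; apply: eq_bigr => s _.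
rewrite -sum1_card natr_sum mulr_sumr [RHS]big_mkcond /=; apply: eq_bigr => x _.
by rewrite all_rcons unfold_in; case: (P x); case: (all P s); rewrite ?mulr1 ?mulr0.
Qed.

Lemma sum_site_seqs1 t : \sum_(s <- site_seqs t) (1 : R) = (N%:R) ^+ t.
Proof. by rewrite -(sum_site_seqs_all t predT); apply: eq_bigr => s _; rewrite all_predT. Qed.

Definition unvisited (s : seq T) : {set T} := [set x | x \notin s].

Lemma card_unvisited (s : seq T) :
  (#|unvisited s|%:R : R) = \sum_x (all (predC1 x) s)%:R.
Proof.
rewrite -sum1_card natr_sum big_mkcond /=; apply: eq_bigr => x _.
by rewrite inE all_predC has_pred1; case: (x \in s).
Qed.

Lemma sum_card_unvisited t :
  \sum_(s <- site_seqs t) (#|unvisited s|%:R : R) = N%:R * (N.-1%:R) ^+ t.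
Proof.
under eq_bigr do rewrite card_unvisited.
rewrite exchange_big mulr_natl -sumr_const; apply: eq_bigr => x _.
by rewrite sum_site_seqs_all cardC1.
Qed.

(* Second moment: two distinct sites are both unvisited for (N - 2)^t of the N^t sequences. *)
Lemma sum_card_unvisited2 t :
  \sum_(s <- site_seqs t) (#|unvisited s|%:R : R) ^+ 2 <=
  N%:R * (N.-1%:R) ^+ t + N%:R * N%:R * ((N - 2)%:R) ^+ t.
Proof.
under eq_bigr do rewrite card_unvisited expr2 mulr_suml.
under eq_bigr do under eq_bigr do rewrite mulr_sumr.
rewrite exchange_big /=.
have both x y : \sum_(s <- site_seqs t) ((all (predC1 x) s)%:R * (all (predC1 y) s)%:R : R)
    = (N - (x != y).+1)%:R ^+ t.
  rewrite -card2 -(cardC (pred2 x y)) addKn -sum_site_seqs_all.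
  apply: eq_bigr => s _; rewrite -natrM mulnb -all_predI.
  by rewrite (@eq_all _ _ [predC pred2 x y]) // => z /=; rewrite negb_or.
apply: (@le_trans _ _ (\sum_(x : T) ((N.-1%:R) ^+ t + N%:R * ((N - 2)%:R) ^+ t))); last first.
  by rewrite big_split /= !sumr_const -mulrA !mulr_natl.
apply: ler_sum => x _; rewrite exchange_big /= (bigD1 x) //= both eqxx subn1 lerD //.
under eq_bigr => y yx do rewrite both eq_sym yx.
rewrite sumr_const -[_ *+ #|_|]mulr_natl.
by apply: ler_wpM2r; rewrite ?exprn_ge0 ?ler_nat ?max_card.
Qed.

Lemma sum_card_unvisited_dev2 t (m : R) : (2 <= N)%N ->
  m = N%:R * ((N.-1)%:R / N%:R) ^+ t ->
  \sum_(s <- site_seqs t) (#|unvisited s|%:R - m) ^+ 2 <= m * (N%:R) ^+ t.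
Proof.
move=> N2 hm; set Nr : R := N%:R; set q := (N.-1)%:R / Nr; set K := Nr ^+ t.
have Nr2 : 2 <= Nr by rewrite /Nr (ler_nat R 2).
have hN1 : (N.-1)%:R = Nr - 1 :> R by rewrite /Nr -(natrB _ (ltnW N2)) subn1.
have hN2 : (N - 2)%:R = Nr - 2 :> R by rewrite /Nr natrB.
have hq : (N.-1)%:R = q * Nr :> R by rewrite /q mulfVK // gt_eqF //; lra.
have mean : \sum_(s <- site_seqs t) (#|unvisited s|%:R : R) = m * K.
  by rewrite sum_card_unvisited -/Nr hq exprMn hm -/q /K mulrA.
(* (N - 2) N <= (N - 1)^2 bounds the pair count by the square of the mean. *)
have hqq : Nr - 2 <= q * q * Nr.
  have -> : q * q * Nr = (Nr - 1) * (Nr - 1) / Nr by rewrite /q hN1; field; lra.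
  rewrite ler_pdivlMr; [nra | lra].
have second : \sum_(s <- site_seqs t) (#|unvisited s|%:R : R) ^+ 2 <= m * K + m ^+ 2 * K.
  apply: le_trans (sum_card_unvisited2 t) _; rewrite -/Nr -mean sum_card_unvisited lerD //.
  have -> : m ^+ 2 * K = Nr * Nr * (q * q * Nr) ^+ t by rewrite hm /K !exprMn; ring.
  apply: ler_wpM2l; first by apply: mulr_ge0; lra.
  by apply: lerXn2r; rewrite ?nnegrE ?hN2; lra.
have -> : \sum_(s <- site_seqs t) (#|unvisited s|%:R - m) ^+ 2 =
   \sum_(s <- site_seqs t) (#|unvisited s|%:R : R) ^+ 2
   - 2 * m * \sum_(s <- site_seqs t) (#|unvisited s|%:R : R)
   + m ^+ 2 * \sum_(s <- site_seqs t) (1 : R).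
  by rewrite !mulr_sumr -sumrB -big_split; apply: eq_bigr => s _ /=; ring.
have K0 : 0 <= K by rewrite exprn_ge0 //; lra.
rewrite sum_site_seqs1 -/Nr -/K mean; nra.
Qed.

End UnvisitedSites.

Section SpinSystem.
Variables (R : realType) (T : finType).
Local Notation cfg := {ffun T -> bool}.
Local Notation N := #|T|.
Local Notation spin := (spin R).
Variable nu : cfg -> R.
Hypothesis nu_gt0 : forall x, 0 < nu x.
Hypothesis nu_supermod : forall x y, nu x * nu y <= nu (cfg_join x y) * nu (cfg_meet x y).
Hypothesis nu_sum1 : \sum_e nu e = 1.

Definition cfg_neg (e : cfg) : cfg := [ffun i => ~~ e i].
Hypothesis nu_neg : forall e, nu (cfg_neg e) = nu e.

Lemma cfg_negK : involutive cfg_neg.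
Proof. by move=> e; apply/ffunP=> i; rewrite !ffunE negbK. Qed.

Lemma spinE b : spin b = 2 * b%:R - 1.
Proof. by case: b; rewrite /spin /=; lra. Qed.

Lemma spin_mean0 x : \sum_e nu e * spin (e x) = 0.
Proof.
have : \sum_e nu e * spin (e x) = - \sum_e nu e * spin (e x).
  rewrite [LHS](reindex_inj (inv_inj cfg_negK)) /= -sumrN; apply: eq_bigr => e _.
  by rewrite nu_neg ffunE /spin; case: (e x); rewrite /= ?mulrN ?mulr1 ?opprK.
set S := \sum_e _; lra.
Qed.

Definition corr (x y : T) : R := \sum_e nu e * (spin (e x) * spin (e y)).

(* FKG for the indicators of a plus spin at x and at y, both of mean 1/2. *)
Lemma corr_ge0 x y : 0 <= corr x y.
Proof.
have incr z : increasing (fun e : cfg => (e z)%:R : R).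
  by move=> e f /forallP /(_ z); case: (e z); case: (f z).
have := fkg nu_gt0 nu_supermod (fun e => ler0n _ (e x)) (fun e => ler0n _ (e y))
  (incr x) (incr y).
have mean z : \sum_e nu e * spin (e z) = 2 * \sum_e nu e * (e z)%:R - 1.
  under eq_bigr do rewrite spinE mulrBr mulr1 mulrCA.
  by rewrite sumrB -mulr_sumr nu_sum1.
have -> : corr x y = \sum_e (4 * (nu e * ((e x)%:R * (e y)%:R)) - 2 * (nu e * (e x)%:R)
   - 2 * (nu e * (e y)%:R) + nu e).
  by apply: eq_bigr => e _; rewrite !spinE; case: (e x); case: (e y) => /=; ring.
rewrite big_split /= !sumrB -!mulr_sumr nu_sum1.
have := spin_mean0 x; have := spin_mean0 y; rewrite !mean mulr1; nra.
Qed.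

Definition magnet (S : {set T}) (e : cfg) : R := \sum_(x in S) spin (e x).

Lemma nu_magnet2_le S (c : R) : \sum_x \sum_(y | y != x) corr x y <= c ->
  \sum_e nu e * magnet S e ^+ 2 <= N%:R + c.
Proof.
move=> hc; apply: (@le_trans _ _ (\sum_x \sum_y corr x y)).
  rewrite /magnet; under eq_bigr do rewrite expr2 mulr_suml mulr_sumr.
  under eq_bigr do under eq_bigr do rewrite mulr_sumr mulr_sumr.
  rewrite exchange_big /=; under eq_bigr do rewrite exchange_big /=.
  rewrite [leLHS]big_mkcond; apply: ler_sum => x _; case: (x \in S).
    rewrite [leLHS]big_mkcond; apply: ler_sum => y _; case: (y \in S) => //.
    exact: corr_ge0.
  by rewrite sumr_ge0 // => y _; exact: corr_ge0.
have corr_diag x : corr x x = 1.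
  by rewrite /corr -nu_sum1; apply: eq_bigr => e _; case: (e x); rewrite /spin ?mulrNN !mulr1.
under eq_bigr => x _ do rewrite (bigD1 x) //= corr_diag.
by rewrite big_split /= sumr_const lerD.
Qed.

Definition all_plus : cfg := [ffun => true].
Definition dirac_plus (e : cfg) : R := (e == all_plus)%:R.
Definition plus_on (S : {set T}) : pred cfg := fun e => [forall x in S, e x].

Lemma cfg_le_all_plus e : cfg_le e all_plus.
Proof. by apply/forallP=> i; rewrite ffunE implybT. Qed.

Lemma plus_on_all_plus S : plus_on S all_plus.
Proof. by apply/forallP=> x; rewrite ffunE implybT. Qed.

Lemma plus_on_set (S : {set T}) (e : cfg) x b :
  x \notin S -> plus_on S (cfg_set e x b) = plus_on S e.
Proof.
move=> xS; apply/forallP/forallP=> h y; apply/implyP=> yS; have := implyP (h y) yS;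
  by rewrite ffunE; case: (y =P x) => // yx; rewrite -yx yS in xS.
Qed.

Lemma plus_on_increasing S : increasing (fun e => (plus_on S e)%:R : R).
Proof.
move=> e f lef; case: (boolP (plus_on S e)) => //= h.
suff -> : plus_on S f by [].
apply/forallP=> x; apply/implyP=> xS.
exact: (implyP (forallP lef x)) (implyP (forallP h x) xS).
Qed.

Lemma magnet_increasing S : increasing (magnet S).
Proof.
move=> e f /forallP lef; apply: ler_sum => x _.
by have := lef x; case: (e x); case: (f x) => //= _; rewrite /spin; lra.
Qed.

(* [%:R] reads its argument in [nat_scope], hence the [%R]. *)
Lemma le_increasing (g : cfg -> R) (a : R) :
  increasing g -> increasing (fun e => (a <= g e)%R%:R : R).
Proof.
move=> gi e f lef; case: (boolP (a <= g e)) => //= h.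
by rewrite (le_trans h (gi _ _ lef)).
Qed.

Lemma magnet_plus_on S e :
  plus_on S e -> magnet [set: T] e = #|S|%:R + magnet (~: S) e.
Proof.
move=> hS; rewrite /magnet (big_setID S) /= setTI setTD -sum1_card natr_sum.
by congr (_ + _); apply: eq_bigr => x xS; rewrite (implyP (forallP hS x) xS).
Qed.

Local Notation nu_plus S := (nu_on nu (plus_on S)).

Lemma nu_plus_ge0 S e : 0 <= nu_plus S e.
Proof. by apply: mulr_ge0; [exact: ltW | exact: ler0n]. Qed.

Lemma nu_plus_mass_gt0 S : 0 < \sum_e nu_plus S e.
Proof.
rewrite (bigD1 all_plus) //= /nu_on plus_on_all_plus mulr1 ltr_wpDr ?nu_gt0 //.
by rewrite sumr_ge0 // => e _; exact: nu_plus_ge0.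
Qed.

(* The heat-bath updates leave the sites outside [s] plus, and they preserve [nu]
   restricted to that event; monotonicity then compares the two. *)
Lemma hb_steps_plus_dominates (s : seq T) (g : cfg -> R) : increasing g ->
  \sum_e nu_plus (unvisited s) e * g e <=
  (\sum_f nu_plus (unvisited s) f) * \sum_e hb_steps nu s dirac_plus e * g e.
Proof.
move=> gi; set U := unvisited s; set c := \sum_f nu_plus U f.
have start : dominates (fun e => c * dirac_plus e) (nu_plus U).
  move=> h hi; apply: (@le_trans _ _ (\sum_e nu_plus U e * h all_plus)).
    apply: ler_sum => e _; apply: ler_wpM2l; first exact: nu_plus_ge0.
    exact/hi/cfg_le_all_plus.
  rewrite -mulr_suml -/c [leRHS](bigD1 all_plus) //= /dirac_plus eqxx mulr1 big1 ?addr0 //.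
  by move=> e /negbTE ->; rewrite mulr0 mul0r.
have inv i : i \in s -> forall e b, plus_on U (cfg_set e i b) = plus_on U e.
  by move=> iin e b; apply: plus_on_set; rewrite inE iin.
have := hb_steps_dominates nu_gt0 nu_supermod s start gi.
rewrite (eq_bigr (fun e => nu_plus U e * g e)) => [|e _]; last first.
  by rewrite (hb_steps_nu_on nu_gt0 inv).
move/le_trans; apply; rewrite mulr_sumr le_eqVlt; apply/orP; left; apply/eqP.
by apply: eq_bigr => e _; rewrite hb_steps_scale mulrA.
Qed.

Lemma hb_steps_increasing_ge0 (s : seq T) (g : cfg -> R) :
  increasing g -> (forall e, 0 <= g e) -> 0 <= \sum_e hb_steps nu s dirac_plus e * g e.
Proof.
move=> gi g0; have := hb_steps_plus_dominates s gi.
have h0 : 0 <= \sum_e nu_plus (unvisited s) e * g e.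
  by rewrite sumr_ge0 // => e _; rewrite mulr_ge0 ?nu_plus_ge0.
by move=> /(le_trans h0); rewrite pmulr_rge0 // nu_plus_mass_gt0.
Qed.

Lemma indicator_le_sqr (x a : R) : 0 < a -> (a <= x)%R%:R <= x ^+ 2 / a ^+ 2.
Proof.
move=> a0; case: (boolP (a <= x)) => h /=; last by rewrite divr_ge0 ?sqr_ge0.
by rewrite ler_pdivlMr ?exprn_gt0 // mul1r; nra.
Qed.

Lemma indicator_ge_sqr (x b : R) : 0 < b -> 1 - (- b <= x)%R%:R <= x ^+ 2 / b ^+ 2.
Proof.
move=> b0; case: (boolP (- b <= x)) => h /=; first by rewrite subrr divr_ge0 ?sqr_ge0.
rewrite subr0 ler_pdivlMr ?exprn_gt0 // mul1r.
by move: h; rewrite -ltNge => h; nra.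
Qed.

(* FKG: conditioning on the unvisited sites being plus can only raise the magnetization
   of the other sites, which stays above [- b] with high probability by Chebyshev. *)
Lemma hb_steps_magnet_lb (s : seq T) (a b : R) : 0 < b -> a + b <= #|unvisited s|%:R ->
  1 - (\sum_e nu e * magnet (~: unvisited s) e ^+ 2) / b ^+ 2 <=
  \sum_e hb_steps nu s dirac_plus e * (a <= magnet [set: T] e)%R%:R.
Proof.
move=> b0 hab; set U := unvisited s; set W := ~: U.
have pos := nu_plus_mass_gt0 U.
have := fkg nu_gt0 nu_supermod (fun e => ler0n _ (plus_on U e))
  (fun e => ler0n _ (- b <= magnet W e)%R) (plus_on_increasing U)
  (le_increasing (- b) (magnet_increasing W)).
rewrite nu_sum1 mulr1 => fkgUW.
have plus_on_le : \sum_e nu e * ((plus_on U e)%:R * (- b <= magnet W e)%R%:R) <=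
    \sum_e nu_plus U e * (a <= magnet [set: T] e)%R%:R.
  apply: ler_sum => e _; rewrite /nu_on -mulrA; apply: ler_wpM2l; first exact: ltW.
  case: (boolP (plus_on U e)) => hU; last by rewrite !mul0r.
  case: (boolP (- b <= magnet W e)) => hW; last by rewrite mulr0 mulr_ge0.
  suff -> : (a <= magnet [set: T] e)%R by [].
  by rewrite (magnet_plus_on hU) -/W; lra.
have nuW_le : \sum_e nu e * (- b <= magnet W e)%R%:R <=
    \sum_e hb_steps nu s dirac_plus e * (a <= magnet [set: T] e)%R%:R.
  rewrite -(ler_pM2l pos); apply: le_trans fkgUW (le_trans plus_on_le _).
  exact: hb_steps_plus_dominates (le_increasing a (magnet_increasing _)).
apply: le_trans nuW_le; rewrite lerBlDr -lerBlDl -[X in X - _]nu_sum1 -sumrB mulr_suml.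
apply: ler_sum => e _; rewrite -[X in X - _]mulr1 -mulrBr -mulrA.
by apply: ler_wpM2l; [exact: ltW | exact: indicator_ge_sqr].
Qed.

Section MagnetizationEvent.
Variable m : R.
Hypothesis m_gt0 : 0 < m.
Hypothesis corr_offdiag : \sum_x \sum_(y | y != x) corr x y <= 1.
Hypothesis m_large : 16 * (N%:R + 1) <= m ^+ 2.

Local Notation eps := ((N%:R + 1) / (m / 4) ^+ 2).
Local Notation high_magnet e := ((m / 4 <= magnet [set: T] e)%R%:R : R).

Lemma eps_le1 : eps <= 1.
Proof.
have -> : (m / 4) ^+ 2 = m ^+ 2 / 16 by field.
by rewrite ler_pdivrMr ?divr_gt0 ?exprn_gt0 // mul1r ler_pdivlMr // mulrC.
Qed.

Lemma nu_high_magnet_le : \sum_e nu e * high_magnet e <= eps.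
Proof.
have a0 : 0 < m / 4 by rewrite divr_gt0.
apply: (@le_trans _ _ ((\sum_e nu e * magnet [set: T] e ^+ 2) / (m / 4) ^+ 2)).
  rewrite mulr_suml; apply: ler_sum => e _; rewrite -mulrA.
  by apply: ler_wpM2l; [exact: ltW | exact: indicator_le_sqr].
by apply: ler_wpM2r; [rewrite invr_ge0 exprn_ge0 // ltW | exact: nu_magnet2_le].
Qed.

(* The second factor is at most the indicator of [m / 2 <= #|unvisited s|]. *)
Lemma hb_steps_high_magnet_lb (s : seq T) :
  (1 - eps) * (1 - (#|unvisited s|%:R - m) ^+ 2 / (m / 2) ^+ 2) <=
  \sum_e hb_steps nu s dirac_plus e * high_magnet e.
Proof.
have a0 : 0 < m / 4 by rewrite divr_gt0.
have eps1 := eps_le1.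
have [hU|hU] := lerP (m / 2) #|unvisited s|%:R.
  apply: (@le_trans _ _ (1 - eps)).
    by rewrite ler_piMr ?subr_ge0 // lerBlDr lerDl divr_ge0 ?sqr_ge0.
  apply: le_trans (hb_steps_magnet_lb a0 _); last lra.
  rewrite lerD2l lerN2; apply: ler_wpM2r; first by rewrite invr_ge0 exprn_ge0 // ltW.
  exact: nu_magnet2_le.
apply: (@le_trans _ _ 0).
  rewrite mulr_ge0_le0 ?subr_ge0 // subr_le0 ler_pdivlMr ?exprn_gt0 ?divr_gt0 //; nra.
apply: hb_steps_increasing_ge0 => [|e]; last exact: ler0n.
exact: le_increasing (magnet_increasing _).
Qed.

End MagnetizationEvent.

(* [site_seqs T t] lists the N^t equally likely sequences of updated sites. *)
Definition chain_law (t : nat) (e : cfg) : R :=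
  (N%:R^-1) ^+ t * \sum_(s <- site_seqs T t) hb_steps nu s dirac_plus e.

Lemma chain_law_pair t (g : cfg -> R) : \sum_e chain_law t e * g e =
  (N%:R^-1) ^+ t * \sum_(s <- site_seqs T t) \sum_e hb_steps nu s dirac_plus e * g e.
Proof.
under eq_bigr do rewrite -mulrA mulr_suml; rewrite -mulr_sumr; congr (_ * _).
by rewrite exchange_big.
Qed.

Lemma chain_law_mass t : (0 < N)%N -> \sum_e chain_law t e = 1.
Proof.
move=> N0; transitivity (\sum_e chain_law t e * 1).
  by apply: eq_bigr => e _; rewrite mulr1.
have one s : \sum_e hb_steps nu s dirac_plus e * 1 = 1.
  rewrite (eq_bigr _ (fun e _ => mulr1 _)) (hb_steps_mass nu_gt0).
  by rewrite (bigD1 all_plus) //= /dirac_plus eqxx big1 ?addr0 // => e /negbTE ->.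
rewrite chain_law_pair (eq_bigr _ (fun s _ => one s)) sum_site_seqs1.
by rewrite -exprMn mulVf ?expr1n // pnatr_eq0 -lt0n.
Qed.

Lemma chain_law_high_magnet_lb t (m : R) : (2 <= N)%N ->
  m = N%:R * ((N.-1)%:R / N%:R) ^+ t -> 0 < m ->
  \sum_x \sum_(y | y != x) corr x y <= 1 -> 16 * (N%:R + 1) <= m ^+ 2 ->
  (1 - (N%:R + 1) / (m / 4) ^+ 2) * (1 - 4 / m) <=
  \sum_e chain_law t e * (m / 4 <= magnet [set: T] e)%R%:R.
Proof.
move=> N2 hm m0 hcorr hm2; set Nr : R := N%:R; set K := Nr ^+ t.
have Nr0 : 0 < Nr by rewrite ltr0n; case: N N2.
have K0 : 0 < K by rewrite exprn_gt0.
have eps1 := eps_le1 m0 hm2.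
rewrite chain_law_pair; apply: (@le_trans _ _ ((Nr^-1) ^+ t * \sum_(s <- site_seqs T t)
    (1 - (Nr + 1) / (m / 4) ^+ 2) * (1 - (#|unvisited s|%:R - m) ^+ 2 / (m / 2) ^+ 2))).
  rewrite -mulr_sumr sumrB -mulr_suml sum_site_seqs1 -/Nr -/K mulrCA.
  apply: ler_wpM2l; first lra.
  have cheb := sum_card_unvisited_dev2 N2 hm; rewrite -/Nr -/K in cheb.
  rewrite -exprVn mulrBr -exprMn mulVf ?gt_eqF // expr1n lerB //.
  have Kinv : Nr^-1 ^+ t * K = 1 by rewrite -exprMn mulVf ?expr1n // gt_eqF.
  have Vm2 : 0 <= (m / 2)^-1 ^+ 2 by rewrite exprn_ge0 // invr_ge0 divr_ge0 // ltW.
  apply: (@le_trans _ _ (Nr^-1 ^+ t * (m * K * (m / 2)^-1 ^+ 2))).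
    by apply: ler_wpM2l; [rewrite exprn_ge0 // invr_ge0 ltW | exact: ler_wpM2r].
  have -> : Nr^-1 ^+ t * (m * K * (m / 2)^-1 ^+ 2) = m * (m / 2)^-1 ^+ 2.
    by rewrite -[RHS]mul1r -Kinv; ring.
  by rewrite le_eqVlt; apply/orP; left; apply/eqP; field; rewrite gt_eqF.
apply: ler_wpM2l; first by rewrite exprn_ge0 // invr_ge0 ltW.
apply: ler_sum => s _; exact: hb_steps_high_magnet_lb.
Qed.

Definition tv (p q : cfg -> R) : R := 2^-1 * \sum_e `|p e - q e|.

Lemma tv_ge_event (p q : cfg -> R) (A : pred cfg) : \sum_e p e = \sum_e q e ->
  \sum_e p e * (A e)%:R - \sum_e q e * (A e)%:R <= tv p q.
Proof.
move=> pq.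
have : \sum_e (p e - q e) * spin (A e) <= \sum_e `|p e - q e|.
  apply: ler_sum => e _; case: (A e); rewrite /spin ?mulr1 ?ler_norm //.
  by rewrite mulrN1 -normrN ler_norm.
have -> : \sum_e (p e - q e) * spin (A e) =
    \sum_e (2 * (p e * (A e)%:R) - 2 * (q e * (A e)%:R) - p e + q e).
  by apply: eq_bigr => e _; rewrite spinE; ring.
rewrite big_split !sumrB /= -!mulr_sumr pq /tv; lra.
Qed.

Theorem heat_bath_tv_lb t (m : R) : (2 <= N)%N -> m = N%:R * ((N.-1)%:R / N%:R) ^+ t ->
  \sum_x \sum_(y | y != x) corr x y <= 1 ->
  1600 * (N%:R + 1) <= m ^+ 2 -> 400 <= m -> 4^-1 < tv (chain_law t) nu.
Proof.
move=> N2 hm hcorr hm2 hm400; have m0 : 0 < m by lra.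
have N0 : 0 <= N%:R :> R by exact: ler0n.
have hm16 : 16 * (N%:R + 1) <= m ^+ 2 by lra.
have eps_le : (N%:R + 1) / (m / 4) ^+ 2 <= 100^-1.
  have -> : (m / 4) ^+ 2 = m ^+ 2 / 16 by field.
  by rewrite ler_pdivrMr ?divr_gt0 ?exprn_gt0 //; lra.
have inv_m : 4 / m <= 100^-1 by rewrite ler_pdivrMr // -ler_pdivrMl //; lra.
have mass : \sum_e chain_law t e = \sum_e nu e by rewrite nu_sum1 chain_law_mass // ltnW.
apply: lt_le_trans (tv_ge_event (fun e => m / 4 <= magnet [set: T] e)%R mass).
have := chain_law_high_magnet_lb N2 hm m0 hcorr hm16.
have := nu_high_magnet_le m0 hcorr.
move=> hQ hP.
have : (99 / 100) * (99 / 100) <= (1 - (N%:R + 1) / (m / 4) ^+ 2) * (1 - 4 / m).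
  by apply: ler_pM; lra.
lra.
Qed.

End SpinSystem.

Section IsingMarginal.
Variables (R : realType) (n : nat) (adj : rel 'I_n) (J : 'I_n -> 'I_n -> R).
Hypothesis J_ge0 : forall u v, 0 <= J u v.
Variable F : {set 'I_n}.

Local Notation w := (ising_weight adj J).
Local Notation mu := (ising_mu adj J).
Local Notation nu := (@nuF R n adj J F).
Local Notation cfgF := (Fconfig F).

Lemma ising_Z_gt0 : 0 < ising_Z adj J.
Proof.
rewrite /ising_Z (bigD1 [ffun=> false]) //= ltr_wpDr ?expR_gt0 //.
by rewrite sumr_ge0 // => s _; rewrite ltW ?expR_gt0.
Qed.

Lemma ising_mu_gt0 s : 0 < mu s.
Proof. by rewrite /ising_mu divr_gt0 ?expR_gt0 ?ising_Z_gt0. Qed.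

Lemma ising_mu_sum1 : \sum_s mu s = 1.
Proof. by rewrite /ising_mu -mulr_suml mulfV // gt_eqF // ising_Z_gt0. Qed.

Lemma spin_supermod (a b c d : bool) :
  spin R a * spin R b + spin R c * spin R d <=
  spin R (a || c) * spin R (b || d) + spin R (a && c) * spin R (b && d).
Proof. by case: a; case: b; case: c; case: d; rewrite /spin /=; lra. Qed.

Lemma ising_weight_supermod (x y : config n) :
  w x * w y <= w (cfg_join x y) * w (cfg_meet x y).
Proof.
rewrite /ising_weight -!expRD ler_expR -!big_split /=.
apply: ler_sum => u _; rewrite -!big_split /=; apply: ler_sum => v _.
by rewrite !ffunE -!mulrA -!mulrDr ler_wpM2l ?spin_supermod.
Qed.

Lemma ising_mu_supermod (x y : config n) :
  mu x * mu y <= mu (cfg_join x y) * mu (cfg_meet x y).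
Proof.
rewrite /ising_mu mulrACA [X in _ <= X]mulrACA ler_wpM2r ?ising_weight_supermod //.
by rewrite mulr_ge0 // invr_ge0 ltW // ising_Z_gt0.
Qed.

Lemma restrF_join (s s' : config n) :
  restrF F (cfg_join s s') = cfg_join (restrF F s) (restrF F s').
Proof. by apply/ffunP=> y; rewrite !ffunE. Qed.

Lemma restrF_meet (s s' : config n) :
  restrF F (cfg_meet s s') = cfg_meet (restrF F s) (restrF F s').
Proof. by apply/ffunP=> y; rewrite !ffunE. Qed.

Lemma nuF_supermod (x y : cfgF) : nu x * nu y <= nu (cfg_join x y) * nu (cfg_meet x y).
Proof.
rewrite /nuF !(big_mkcond (fun s => restrF F s == _)) /=.
have mu0 s : 0 <= mu s by exact: ltW (ising_mu_gt0 s).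
apply: ahlswede_daykin => [s|s|s|s|s s']; try by case: ifP.
case: eqP => [<-|_]; last by rewrite mul0r mulr_ge0 //; case: ifP.
case: eqP => [<-|_]; last by rewrite mulr0 mulr_ge0 //; case: ifP.
by rewrite restrF_join restrF_meet !eqxx ising_mu_supermod.
Qed.

Lemma nuF_gt0 eta : 0 < nu eta.
Proof.
pose s : config n := [ffun i => if insub i is Some y then eta y else false].
have restrF_s : restrF F s = eta by apply/ffunP=> y; rewrite !ffunE valK.
rewrite /nuF (bigD1 s) ?restrF_s //= ltr_wpDr ?ising_mu_gt0 //.
by rewrite sumr_ge0 // => s' _; exact: ltW (ising_mu_gt0 s').
Qed.

Lemma sum_mu_restrF (G : cfgF -> R) :
  \sum_s mu s * G (restrF F s) = \sum_eta nu eta * G eta.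
Proof.
rewrite /nuF; under [RHS]eq_bigr do rewrite mulr_suml.
rewrite (exchange_big_dep xpredT) //=; apply: eq_bigr => s _.
by rewrite (big_pred1 (restrF F s)) // => eta /=; rewrite eq_sym.
Qed.

Lemma nuF_sum1 : \sum_eta nu eta = 1.
Proof.
transitivity (\sum_eta nu eta * 1); first by apply: eq_bigr => eta _; rewrite mulr1.
rewrite -(sum_mu_restrF (fun _ => 1)) -[X in _ = X]ising_mu_sum1.
by apply: eq_bigr => s _; rewrite mulr1.
Qed.

Lemma ising_mu_neg s : mu (cfg_neg s) = mu s.
Proof.
rewrite /ising_mu /ising_weight; congr (expR _ / _).
apply: eq_bigr => u _; apply: eq_bigr => v _.
by rewrite !ffunE; case: (s u); case: (s v); rewrite /spin /=; ring.
Qed.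

Lemma nuF_neg eta : nu (cfg_neg eta) = nu eta.
Proof.
have negK := @cfg_negK 'I_n.
rewrite /nuF (reindex_inj (inv_inj negK)) /=; apply: eq_big => s.
  apply/eqP/eqP => [e|<-]; last by apply/ffunP=> y; rewrite !ffunE.
  by apply/ffunP=> y; have := congr1 (fun f : cfgF => f y) e; rewrite !ffunE => /negb_inj.
by move=> _; exact: ising_mu_neg.
Qed.

End IsingMarginal.

Section IsingChain.
Variables (R : realType) (n : nat) (adj : rel 'I_n) (J : 'I_n -> 'I_n -> R).
Variable F : {set 'I_n}.
Local Notation nu := (@nuF R n adj J F).

Lemma card_Fsite : #|{: Fsite F}| = #|F|.
Proof. by rewrite card_sig; apply: eq_card => x; rewrite inE. Qed.

Lemma setF_cfg_set (e : Fconfig F) (x : Fsite F) b : setF e (val x) b = cfg_set e x b.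
Proof. by apply/ffunP=> y; rewrite !ffunE (inj_eq val_inj). Qed.

Lemma Kmat_hb_kernel (e e' : Fconfig F) :
  Kmat adj J e e' = (#|{: Fsite F}|%:R)^-1 * \sum_(x : Fsite F) hb_kernel nu x e e'.
Proof.
rewrite /Kmat card_Fsite; congr (_ * _).
rewrite (big_sub F (fun v => \sum_(b : bool) (if e' == setF e v b then
  nu (setF e v b) / (nu (setF e v true) + nu (setF e v false)) else 0))).
by apply: eq_bigr => x _; apply: eq_bigr => b _; rewrite !setF_cfg_set.
Qed.

Lemma lawZ_chain_law t : lawZ adj J F t =1 chain_law nu t.
Proof.
elim: t => [|t IH] e.
  rewrite /= ffunE /chain_law expr0 mul1r big_seq1 /= /dirac_plus.
  by case: eqP.
rewrite /= ffunE /chain_law sum_site_seqsS.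
under eq_bigr do rewrite IH Kmat_hb_kernel /chain_law.
have -> : \sum_(s <- site_seqs _ t) \sum_x hb_steps nu (rcons s x) (@dirac_plus R _) e =
    \sum_(s <- site_seqs _ t) \sum_x \sum_f hb_steps nu s (@dirac_plus R _) f * hb_kernel nu x f e.
  by apply: eq_bigr => s _; apply: eq_bigr => x _; rewrite hb_steps_rcons.
set c := (#|{: Fsite F}|%:R : R)^-1; rewrite exprS.
under eq_bigr do rewrite [_ * (c * _)]mulrCA -!mulrA.
rewrite -mulr_sumr -mulrA; congr (_ * _); rewrite -mulr_sumr; congr (_ * _).
under eq_bigr do rewrite mulr_suml.
rewrite exchange_big /=; apply: eq_bigr => s _.
under eq_bigr do rewrite mulr_sumr.
by rewrite exchange_big.
Qed.

Lemma tv_dist_tv t : tv_dist (lawZ adj J F t) nu = tv (chain_law nu t) nu.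
Proof.
by rewrite /tv_dist /tv; congr (_ * _); apply: eq_bigr => e _; rewrite lawZ_chain_law.
Qed.

Lemma ising_cov_corr (x y : Fsite F) : ising_cov adj J (val x) (val y) = corr nu x y.
Proof.
have spin_restrF (z : Fsite F) (s : config n) : spin R (s (val z)) = spin R (restrF F s z).
  by rewrite ffunE.
have mean0 : ising_E adj J (fun s => spin R (s (val x))) = 0.
  rewrite /ising_E; under eq_bigr do rewrite spin_restrF.
  rewrite (sum_mu_restrF adj J (fun eta : Fconfig F => spin R (eta x))).
  exact: spin_mean0 (@nuF_neg R n adj J F) x.
rewrite /ising_cov mean0 mul0r subr0 /ising_E.
under eq_bigr do rewrite !spin_restrF.
by rewrite (sum_mu_restrF adj J (fun eta : Fconfig F => spin R (eta x) * spin R (eta y))).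
Qed.

Lemma sum_ising_cov :
  \sum_(u in F) \sum_(v in F | v != u) ising_cov adj J u v =
  \sum_(x : Fsite F) \sum_(y | y != x) corr nu x y.
Proof.
rewrite (big_sub F (fun u => \sum_(v in F | v != u) ising_cov adj J u v)).
apply: eq_bigr => x _.
rewrite (big_sub_cond F (fun v => v != val x) (fun v => ising_cov adj J (val x) v)).
by apply: eq_big => [y|y _]; rewrite ?(inj_eq val_inj) ?ising_cov_corr.
Qed.

End IsingChain.

Section Numerics.
Variable R : realType.

Lemma expR39_ge : (300 * 300 : R) <= expR 39.
Proof.
have := @expR_ge1Dxn R 39 3 ltac:(lra).
have -> : (3.+1)`!%:R = 24 :> R by [].
rewrite !exprS expr0 mulr1; lra.
Qed.

Lemma ln_ge2 (n : nat) : (16 <= n)%N -> 2 <= ln (n%:R : R).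
Proof.
move=> n16; set E := expR (2^-1 : R).
have E0 : 0 < E by exact: expR_gt0.
have E2 : E <= 2.
  have := @expR_ge1Dx R (- 2^-1); rewrite expRN -/E => h.
  have hE : E * E^-1 = 1 by rewrite mulfV // gt_eqF.
  set Ei := E^-1 in h hE; nra.
have e2 : expR (2 : R) <= 16.
  have -> : (2 : R) = 4%:R * 2^-1 by field.
  rewrite expRM_natl -/E; apply: (@le_trans _ _ (2 ^+ 4)); last by rewrite !exprS expr0; lra.
  by apply: lerXn2r; rewrite ?nnegrE //; lra.
have n16' : (16 : R) <= n%:R by rewrite (ler_nat R 16).
apply: (@le_trans _ _ (ln (expR 2))); first by rewrite expRK.
by rewrite ler_ln ?posrE ?expR_gt0 //; lra.
Qed.

Lemma ratio_pow_ge (N t : nat) : (2 <= N)%N ->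
  expR (- (t%:R / (N%:R - 1))) <= ((N.-1)%:R / N%:R : R) ^+ t.
Proof.
move=> N2; set Nr : R := N%:R; set q := (N.-1)%:R / Nr.
have Nr2 : 2 <= Nr by rewrite /Nr (ler_nat R 2).
have hN1 : (N.-1)%:R = Nr - 1 :> R by rewrite /Nr -(natrB _ (ltnW N2)) subn1.
have q0 : 0 < q by rewrite /q hN1 divr_gt0 //; lra.
(* 1 / q = 1 + 1 / (N - 1) and ln (1 + x) <= x *)
have lnq : - (Nr - 1)^-1 <= ln q.
  have -> : q = ((Nr - 1)^-1 + 1)^-1.
    by rewrite /q hN1; field; apply/andP; split; rewrite gt_eqF //; lra.
  rewrite lnV ?posrE; last by rewrite addr_gt0 // invr_gt0; lra.
  have inv0 : 0 < (Nr - 1)^-1 by rewrite invr_gt0; lra.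
  by rewrite lerN2 addrC le_ln1Dx //; lra.
rewrite -[q ^+ t]lnK ?posrE ?exprn_gt0 // lnXn // -[ln q *+ t]mulr_natl ler_expR -mulrN.
exact: ler_wpM2l.
Qed.

Lemma unvisited_mean_large (N t : nat) :
  (t%:R : R) < 2^-1 * N%:R * ln (N%:R : R) - 20 * N%:R ->
  [/\ (2 <= N)%N, 1600 * (N%:R + 1) <= (N%:R * ((N.-1)%:R / N%:R) ^+ t) ^+ 2 :> R
    & 400 <= N%:R * ((N.-1)%:R / N%:R) ^+ t :> R].
Proof.
move=> ht; set Nr : R := N%:R; set L := ln Nr; move: ht; rewrite -/Nr -/L => ht.
have t0 : 0 <= (t%:R : R) by [].
have NL40 : 0 < Nr * (L - 40) by nra.
have Nr0 : 0 < Nr.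
  rewrite lt_def ler0n andbT; apply/eqP => N0; move: NL40; rewrite N0 mul0r; lra.
have L40 : 40 < L by move: NL40; rewrite pmulr_rgt0 //; lra.
have N2 : (2 <= N)%N.
  rewrite ltn_neqAle eq_sym -(ltr0n R) Nr0 andbT.
  by apply/eqP => N1; move: L40; rewrite /L /Nr N1 ln1; lra.
have Nr2 : 2 <= Nr by rewrite /Nr (ler_nat R 2).
have LN : L <= Nr - 1 by have := @le_ln1Dx R (Nr - 1) ltac:(lra); rewrite addrCA subrr addr0.
(* 2 t / (N - 1) <= ln N - 39, so the expected number of unvisited sites satisfies
   m ^ 2 >= N ^ 2 exp (39 - ln N) = N exp 39. *)
have hexp : expR (39 - L) <= expR (- (t%:R / (Nr - 1))) ^+ 2.
  rewrite -expRM_natl ler_expR mulrN mulrA lerNr opprB ler_pdivrMr; last lra.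
  have -> : (L - 39) * (Nr - 1) = Nr * L - L - 39 * Nr + 39 by ring.
  lra.
set m := Nr * ((N.-1)%:R / Nr) ^+ t.
have m2 : Nr * expR 39 <= m ^+ 2.
  apply: (@le_trans _ _ (Nr ^+ 2 * expR (39 - L))).
    rewrite expRB /L lnK ?posrE //.
    by have -> : Nr ^+ 2 * (expR 39 / Nr) = Nr * expR 39 by field; rewrite gt_eqF.
  rewrite /m exprMn; apply: ler_wpM2l; first by rewrite exprn_ge0 ?ltW.
  apply: le_trans hexp _; apply: lerXn2r; rewrite ?nnegrE ?expR_ge0 ?exprn_ge0 ?divr_ge0 //.
  exact: ratio_pow_ge.
have m0 : 0 <= m by rewrite /m mulr_ge0 ?exprn_ge0 ?divr_ge0 // ltW.
have := expR39_ge; split => //; first nra.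
have : 400 * 400 <= m ^+ 2 by nra.
nra.
Qed.

End Numerics.

Theorem lemma2p11 :
  exists n0 : nat, forall (R : realType) (n : nat), (n0 <= n)%N ->
  forall (adj : rel 'I_n) (J : 'I_n -> 'I_n -> R) (F : {set 'I_n}),
    symmetric adj -> irreflexive adj ->
    (forall u v, 0 <= J u v) ->
    (forall u v, J u v = J v u) ->
    (#|F|%:Z = Num.floor (Num.sqrt (n%:R : R) / ln (n%:R : R))) ->
    \sum_(u in F) \sum_(v in F | v != u) ising_cov adj J u v <= 2 / ln (n%:R : R) ->
    forall t : nat, mixed_by adj J F t ->
      2^-1 * #|F|%:R * ln (#|F|%:R : R) - 20 * #|F|%:R <= (t%:R : R).
Proof.
exists 16%N => R n n16 adj J F _ _ J_ge0 _ _ cov_small t mixed.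
rewrite leNgt; apply/negP; rewrite -card_Fsite => /unvisited_mean_large[N2 m2 m400].
have corr_small : \sum_(x : Fsite F) \sum_(y | y != x) corr (@nuF R n adj J F) x y <= 1.
  rewrite -sum_ising_cov; apply: le_trans cov_small _.
  by have ln2 := ln_ge2 R n16; rewrite ler_pdivrMr; lra.
have := heat_bath_tv_lb (@nuF_gt0 R n adj J F) (@nuF_supermod R n adj J J_ge0 F)
  (nuF_sum1 adj J F) (@nuF_neg R n adj J F) N2 (erefl _) corr_small m2 m400.
by rewrite -tv_dist_tv ltNge mixed.
Qed.
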